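(* (1) If $t\ge2$ and $\mu_B(t)\le u\le1$, then $\mathfrak{e}^B_{t,u}\in\mathcal{E}(\mathcal{P}^{s+}_{3,5})$. (2) If $t\ge2$, $\mu_B(t)\le u<1$ and $f\in\mathcal{P}^{s+}_{3,5}$ satisfies $f(t,1,1)=f(0,u,1)=f_b(0,u,1)=0$, then $f=\lambda\mathfrak{e}^B_{t,u}$ for some $\lambda\ge0$. (3) If $t\ge2$ and $f\in\mathcal{P}^{s+}_{3,5}$ satisfies $f(t,1,1)=f(0,1,1)=f_{bb}(0,1,1)=0$, then $f=\lambda\mathfrak{e}^B_{t,1}$ for some $\lambda\ge0$. (4) $\mathfrak{e}^B_{2,1}=\mathfrak{e}^C_2$.
   Context: Let $a,b,c$ be variables. For nonnegative integers $m,n$ put $S_{m,n}=a^mb^n+b^mc^n+c^ma^n$, $S_n=S_{n,0}=a^n+b^n+c^n$, $T_{m,n}=S_{m,n}+S_{n,m}$, $U=abc$ (so $S_{1,1}=ab+bc+ca$). Let $\mathcal{H}^s_{3,5}$ be the real vector space of symmetric homogeneous polynomials of degree 5 in $\mathbb{R}[a,b,c]$; it has basis $s_0=S_5-US_{1,1}$, $s_1=T_{4,1}-2US_{1,1}$, $s_2=T_{3,2}-2US_{1,1}$, $s_3=US_2-US_{1,1}$, $s_4=US_{1,1}$. Let $\mathcal{P}^{s+}_{3,5}=\{f\in\mathcal{H}^s_{3,5}: f(a,b,c)\ge 0\text{ for all }a,b,c\ge0\}$. For a closed convex cone $\mathcal{P}$, an element $f\in\mathcal{P}\setminus\{0\}$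 is extremal if whenever $f=g+h$ with $g,h\in\mathcal{P}$ we have $g,h\in\mathbb{R}_{\ge0}f$; $\mathcal{E}(\mathcal{P})$ is the set of extremal elements. $f_b=\partial f/\partial b$, $f_{bb}=\partial^2f/\partial b^2$. Auxiliary functions: $\mu_R(t)=2-t^2+t\sqrt{(t-1)(t+2)}$, $\mu_B(t)=\tfrac12\big(\mu_R(t)-\sqrt{\mu_R(t)^2-4}\big)$ (for $t\ge2$), $\omega(u)=u+\frac1u-2$. Family B: with $p^B_1(t,w)=-2w-3$, $p^B_2(t,w)=w^2+2w+2$, $p^B_3(t,w)=-\frac{2t^3+4t^2+5t+1}{t^2(t+2)}w^2+\frac{2(4t^2+5t+3)}{t+2}w-\frac{3t^3-7t^2-12t-8}{t+2}$, $p^B_4(t,w)=\frac{(t-1)^3(-w^2-2t^2w+t^2(t-2))}{t^2(t+2)}$, put $\mathfrak{e}^B_{t,u}=s_0+\sum_{i=1}^4p^B_i(t,\omega(u))s_i$. Family C: $\mathfrak{e}^C_t=s_0-(t+1)s_1+ts_2+(t+1)^2s_3$. *)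

From Stdlib Require Import Reals.
From Coquelicot Require Import Coquelicot.
Open Scope R_scope.

(* Polynomials in R[a,b,c] are identified with the polynomial functions R^3 -> R
   (faithful, since R is infinite). *)
Definition fun3 := R -> R -> R -> R.

Definition S (m n : nat) : fun3 := fun a b c => a^m*b^n + b^m*c^n + c^m*a^n.
Definition Sn (n : nat) : fun3 := S n 0.
Definition T (m n : nat) : fun3 := fun a b c => S m n a b c + S n m a b c.
Definition U : fun3 := fun a b c => a*b*c.

Definition s0 : fun3 := fun a b c => Sn 5 a b c - U a b c * S 1 1 a b c.
Definition s1 : fun3 := fun a b c => T 4 1 a b c - 2 * U a b c * S 1 1 a b c.
Definition s2 : fun3 := fun a b c => T 3 2 a b c - 2 * U a b c * S 1 1 a b c.
Definition s3 : fun3 := fun a b c => U a b c * Sn 2 a b c - U a b c * S 1 1 a b c.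
Definition s4 : fun3 := fun a b c => U a b c * S 1 1 a b c.

Definition in_H (f : fun3) : Prop :=
  exists x0 x1 x2 x3 x4 : R, forall a b c,
    f a b c = x0 * s0 a b c + x1 * s1 a b c + x2 * s2 a b c
              + x3 * s3 a b c + x4 * s4 a b c.

Definition in_P (f : fun3) : Prop :=
  in_H f /\ forall a b c, 0 <= a -> 0 <= b -> 0 <= c -> 0 <= f a b c.

Definition extremal (P : fun3 -> Prop) (f : fun3) : Prop :=
  P f /\ (exists a b c, f a b c <> 0) /\
  forall g h : fun3, P g -> P h ->
    (forall a b c, f a b c = g a b c + h a b c) ->
    (exists l, 0 <= l /\ forall a b c, g a b c = l * f a b c) /\
    (exists l, 0 <= l /\ forall a b c, h a b c = l * f a b c).

Definition mu_R (t : R) : R := 2 - t^2 + t * sqrt ((t - 1) * (t + 2)).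
Definition mu_B (t : R) : R := (mu_R t - sqrt (mu_R t ^ 2 - 4)) / 2.
Definition omega (u : R) : R := u + 1 / u - 2.

Definition pB1 (t w : R) : R := - 2 * w - 3.
Definition pB2 (t w : R) : R := w^2 + 2 * w + 2.
Definition pB3 (t w : R) : R :=
  - ((2 * t^3 + 4 * t^2 + 5 * t + 1) / (t^2 * (t + 2))) * w^2
  + (2 * (4 * t^2 + 5 * t + 3) / (t + 2)) * w
  - (3 * t^3 - 7 * t^2 - 12 * t - 8) / (t + 2).
Definition pB4 (t w : R) : R :=
  ((t - 1)^3 * (- w^2 - 2 * t^2 * w + t^2 * (t - 2))) / (t^2 * (t + 2)).

Definition eB (t u : R) : fun3 := fun a b c =>
  let w := omega u in
  s0 a b c + pB1 t w * s1 a b c + pB2 t w * s2 a b c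
           + pB3 t w * s3 a b c + pB4 t w * s4 a b c.

Definition eC (t : R) : fun3 := fun a b c =>
  s0 a b c - (t + 1) * s1 a b c + t * s2 a b c + (t + 1)^2 * s3 a b c.

Definition f_b (f : fun3) (a b c : R) : R := Derive (fun y => f a y c) b.
Definition f_bb (f : fun3) (a b c : R) : R := Derive_n (fun y => f a y c) 2 b.

(* With [p = a + b + c], [q = ab + bc + ca] and [r = abc], a symmetric quintic is affine in [r]
   for fixed [p] and [q], and over the nonnegative octant [r] is extremal only at points
   [(x, x, y)] and [(x, y, 0)]. So nonnegativity is checked on these two families, where
   [eB t u] factors as [(y - t x)^2 hB] and [(x + y) (x^2 - (omega u + 2) x y + y^2)^2].
   Conversely, a nonnegative [f] vanishing at [(t, 1, 1)] and [(0, u, 1)] must also have zero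
   derivative there (zero second derivative in [b] when [u = 1]); these four linear conditions
   leave only the ray of [eB t u]. Every summand of [eB t u] inherits its zeros, whence
   extremality. *)

From Stdlib Require Import Reals Lra Psatz.
From Coquelicot Require Import Coquelicot.
Open Scope R_scope.

Lemma continuous_nonneg_at_right (k : R -> R) (t : R) :
  continuous k t -> at_right t (fun x => 0 <= k x) -> 0 <= k t.
Proof.
  intros Hk Hpos.
  apply (filterlim_le (F := at_right t) (fun _ => 0) k 0 (k t) Hpos).
  - apply filterlim_const.
  - apply (filterlim_filter_le_1 (F := locally t)); [apply filter_le_within | exact Hk].
Qed.

Lemma Derive_local_min (f : R -> R) (u d : R) :
  ex_derive f u -> 0 < d -> (forall x, u - d < x < u + d -> f u <= f x) ->
  Derive f u = 0.
Proof.
  intros Hf Hd Hmin.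
  assert (Hlim : derivable_pt_lim f u (Derive f u))
    by (apply is_derive_Reals, Derive_correct, Hf).
  rewrite <- (deriv_minimum f (u - d) (u + d) u (exist _ _ Hlim)); try lra.
  - reflexivity.
  - intros x H1 H2. apply Hmin. lra.
Qed.

Lemma affine_nonneg_between (B C w W : R) :
  0 <= w <= W -> 0 <= C -> 0 <= C + B * W -> 0 <= C + B * w.
Proof.
  intros [Hw HwW] HC HCW.
  destruct (Req_dec W 0) as [HW0 | HW0].
  - replace w with 0 by lra. lra.
  - assert (E : W * (C + B * w) = (W - w) * C + w * (C + B * W)) by ring.
    assert (0 <= W * (C + B * w)) by (rewrite E; nra).
    nra.
Qed.

Definition esym1 (a b c : R) : R := a + b + c.
Definition esym2 (a b c : R) : R := a * b + b * c + c * a.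
Definition esym3 (a b c : R) : R := a * b * c.

Lemma esym_discriminant (a b c : R) :
  let p := esym1 a b c in let q := esym2 a b c in let r := esym3 a b c in
  p^2 * q^2 - 4 * q^3 - 4 * p^3 * r + 18 * p * q * r - 27 * r^2
  = ((a - b) * (b - c) * (c - a))^2.
Proof. unfold esym1, esym2, esym3. simpl. ring. Qed.

Lemma esym1_sq_ge (a b c : R) : 3 * esym2 a b c <= esym1 a b c ^ 2.
Proof.
  unfold esym1, esym2.
  pose proof (pow2_ge_0 (a - b)). pose proof (pow2_ge_0 (b - c)). pose proof (pow2_ge_0 (c - a)).
  nra.
Qed.

(* The bounds are the values of [r] at [((p + s)/3, (p + s)/3, (p - 2 s)/3)] and
   [((p - s)/3, (p - s)/3, (p + 2 s)/3)], the two roots in [r] of the discriminant. *)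
Lemma esym3_between (a b c : R) :
  let p := esym1 a b c in let s := sqrt (p^2 - 3 * esym2 a b c) in
  (p + s)^2 * (p - 2 * s) / 27 <= esym3 a b c <= (p - s)^2 * (p + 2 * s) / 27.
Proof.
  intros p s.
  assert (Hdisc := esym_discriminant a b c). cbv zeta in Hdisc. fold p in Hdisc.
  assert (Hpq : 0 <= p^2 - 3 * esym2 a b c) by (unfold p; pose proof (esym1_sq_ge a b c); lra).
  assert (Hs0 : 0 <= s) by apply sqrt_pos.
  assert (Hs2 : s * s = p^2 - 3 * esym2 a b c) by apply sqrt_sqrt, Hpq.
  assert (Hsq := pow2_ge_0 ((a - b) * (b - c) * (c - a))).
  rewrite <- Hdisc in Hsq. clear Hdisc Hpq.
  clearbody s p. set (r := esym3 a b c) in *. clearbody r.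
  replace (esym2 a b c) with ((p^2 - s * s) / 3) in Hsq by lra.
  assert (Hfac : (27 * r - (p + s)^2 * (p - 2 * s)) * ((p - s)^2 * (p + 2 * s) - 27 * r) >= 0)
    by nra.
  assert (Hord : (p + s)^2 * (p - 2 * s) <= (p - s)^2 * (p + 2 * s)) by nra.
  split; nra.
Qed.

Lemma esym_upper_witness (a b c : R) : 0 <= a -> 0 <= b -> 0 <= c ->
  exists X Y, 0 <= X /\ 0 <= Y /\ esym1 X X Y = esym1 a b c /\
    esym2 X X Y = esym2 a b c /\ esym3 a b c <= esym3 X X Y.
Proof.
  intros Ha Hb Hc.
  assert (Hr := esym3_between a b c). cbv zeta in Hr.
  assert (Hpq := esym1_sq_ge a b c). assert (Hq : 0 <= esym2 a b c) by (unfold esym2; nra).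
  set (p := esym1 a b c) in *. set (q := esym2 a b c) in *.
  assert (Hs0 := sqrt_pos (p^2 - 3 * q)). assert (Hs2 := sqrt_sqrt (p^2 - 3 * q) ltac:(lra)).
  set (s := sqrt (p^2 - 3 * q)) in *.
  assert (Hp : 0 <= p) by (unfold p, esym1; lra).
  exists ((p - s) / 3), ((p + 2 * s) / 3). unfold esym1, esym2, esym3 in *.
  repeat split; [nra | lra | field | nra | lra].
Qed.

Lemma esym_lower_witness (a b c : R) : 0 <= a -> 0 <= b -> 0 <= c ->
  exists X Y, 0 <= X /\ 0 <= Y /\
    ((esym1 X X Y = esym1 a b c /\ esym2 X X Y = esym2 a b c /\
      esym3 X X Y <= esym3 a b c) \/
     (esym1 X Y 0 = esym1 a b c /\ esym2 X Y 0 = esym2 a b c)).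
Proof.
  intros Ha Hb Hc.
  assert (Hr := esym3_between a b c). cbv zeta in Hr.
  assert (Hpq := esym1_sq_ge a b c). assert (Hq : 0 <= esym2 a b c) by (unfold esym2; nra).
  set (p := esym1 a b c) in *. set (q := esym2 a b c) in *.
  assert (Hs0 := sqrt_pos (p^2 - 3 * q)). assert (Hs2 := sqrt_sqrt (p^2 - 3 * q) ltac:(lra)).
  set (s := sqrt (p^2 - 3 * q)) in *.
  assert (Hp : 0 <= p) by (unfold p, esym1; lra).
  destruct (Rle_lt_dec (2 * s) p) as [Hsp | Hsp].
  - exists ((p + s) / 3), ((p - 2 * s) / 3). unfold esym1, esym2, esym3 in *.
    split; [lra | split; [lra | left]]. repeat split; [field | nra | lra].
  - (* the lower endpoint would have a negative coordinate; move to the face [c = 0] *)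
    assert (He : 0 <= p^2 - 4 * q) by nra.
    assert (He0 := sqrt_pos (p^2 - 4 * q)). assert (He2 := sqrt_sqrt _ He).
    set (e := sqrt (p^2 - 4 * q)) in *.
    exists ((p + e) / 2), ((p - e) / 2). unfold esym1, esym2 in *.
    split; [lra | split; [nra | right]]. split; [field | nra].
Qed.

Lemma uvw_nonneg (F : fun3) (alpha beta : R -> R -> R) :
  (forall a b c, F a b c = beta (esym1 a b c) (esym2 a b c)
                           + alpha (esym1 a b c) (esym2 a b c) * esym3 a b c) ->
  (forall X Y, 0 <= X -> 0 <= Y -> 0 <= F X X Y) ->
  (forall X Y, 0 <= X -> 0 <= Y -> 0 <= F X Y 0) ->
  forall a b c, 0 <= a -> 0 <= b -> 0 <= c -> 0 <= F a b c.
Proof.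
  intros HF HXXY HXY0 a b c Ha Hb Hc.
  rewrite HF.
  destruct (Rle_lt_dec 0 (alpha (esym1 a b c) (esym2 a b c))) as [Hal | Hal].
  - destruct (esym_lower_witness a b c Ha Hb Hc)
      as (X & Y & HX & HY & [(E1 & E2 & E3) | (E1 & E2)]).
    + assert (H := HXXY X Y HX HY). rewrite HF, E1, E2 in H. nra.
    + assert (H := HXY0 X Y HX HY). rewrite HF, E1, E2 in H.
      assert (0 <= esym3 a b c) by (unfold esym3; repeat apply Rmult_le_pos; lra).
      replace (esym3 X Y 0) with 0 in H by (unfold esym3; ring). nra.
  - destruct (esym_upper_witness a b c Ha Hb Hc) as (X & Y & HX & HY & E1 & E2 & E3).
    assert (H := HXXY X Y HX HY). rewrite HF, E1, E2 in H. nra.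
Qed.

Definition basis_comb (x0 x1 x2 x3 x4 : R) : fun3 := fun a b c =>
  x0 * s0 a b c + x1 * s1 a b c + x2 * s2 a b c + x3 * s3 a b c + x4 * s4 a b c.

Definition comb_alpha (x0 x1 x2 x3 x4 p q : R) : R :=
  x0 * (5 * p^2 - 6 * q) + x1 * (- p^2 + 3 * q) + x2 * (- 2 * p^2 - 3 * q)
  + x3 * (p^2 - 3 * q) + x4 * q.
Definition comb_beta (x0 x1 x2 p q : R) : R :=
  x0 * (p^5 - 5 * p^3 * q + 5 * p * q^2) + x1 * (p^3 * q - 3 * p * q^2) + x2 * (p * q^2).

Lemma basis_comb_esym (x0 x1 x2 x3 x4 a b c : R) :
  basis_comb x0 x1 x2 x3 x4 a b c
  = comb_beta x0 x1 x2 (esym1 a b c) (esym2 a b c)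
    + comb_alpha x0 x1 x2 x3 x4 (esym1 a b c) (esym2 a b c) * esym3 a b c.
Proof.
  unfold basis_comb, comb_beta, comb_alpha, esym1, esym2, esym3,
    s0, s1, s2, s3, s4, Sn, T, U, S.
  ring.
Qed.

Lemma basis_comb_nonneg (x0 x1 x2 x3 x4 : R) :
  (forall X Y, 0 <= X -> 0 <= Y -> 0 <= basis_comb x0 x1 x2 x3 x4 X X Y) ->
  (forall X Y, 0 <= X -> 0 <= Y -> 0 <= basis_comb x0 x1 x2 x3 x4 X Y 0) ->
  forall a b c, 0 <= a -> 0 <= b -> 0 <= c -> 0 <= basis_comb x0 x1 x2 x3 x4 a b c.
Proof. apply uvw_nonneg with (comb_alpha x0 x1 x2 x3 x4) (comb_beta x0 x1 x2), basis_comb_esym. Qed.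

Lemma basis_comb_0b1 (x0 x1 x2 x3 x4 b : R) :
  basis_comb x0 x1 x2 x3 x4 0 b 1 = x0 * (b^5 + 1) + x1 * (b^4 + b) + x2 * (b^3 + b^2).
Proof. unfold basis_comb, s0, s1, s2, s3, s4, Sn, T, U, S. ring. Qed.

Definition qB (t w : R) : R := t^3 - 2 * t^2 - 2 * t^2 * w - w^2.

Definition hB (t w x y : R) : R :=
  t^4*x^2*y + 2*t^4*x*y^2 - 2*t^3*w*x^2*y - 4*t^3*w*x*y^2 - 8*t^3*x^2*y - 2*t^3*x*y^2
  + t^3*y^3 + 14*t^2*w*x^2*y - 8*t^2*w*x*y^2 + 16*t^2*x^2*y - 12*t^2*x*y^2 + 2*t^2*y^3
  + 2*t*w^2*x^3 - 5*t*w^2*x^2*y + 4*w^2*x^3 - w^2*x^2*y.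

Lemma w_bound_of_qB_nonneg (t w : R) : 0 < t -> 0 <= qB t w -> 2 * w <= t - 2.
Proof.
  unfold qB. intros Ht HQ.
  assert (H : 0 <= t^2 * (t - 2 - 2 * w)) by nra.
  assert (0 < t^2) by nra.
  destruct (Rle_lt_dec (2 * w) (t - 2)); [lra | nra].
Qed.

Lemma hB_0_nonneg (t x y : R) : 2 <= t -> 0 <= x -> 0 <= y -> 0 <= hB t 0 x y.
Proof.
  intros Ht Hx Hy.
  assert (E : hB t 0 x y
              = t^2 * y * ((t + 2) * y^2 + 2 * (t - 3) * (t + 2) * x * y + (t - 4)^2 * x^2))
    by (unfold hB; ring).
  rewrite E. apply Rmult_le_pos; [nra |].
  destruct (Rle_lt_dec 3 t).
  - assert (0 <= (t - 3) * (t + 2) * x * y) by (repeat apply Rmult_le_pos; lra).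
    assert (0 <= (t + 2) * y^2) by (apply Rmult_le_pos; [lra | apply pow2_ge_0]).
    assert (0 <= (t - 4)^2 * x^2) by (apply Rmult_le_pos; apply pow2_ge_0).
    lra.
  - assert (E' : (t + 2) * y^2 + 2 * (t - 3) * (t + 2) * x * y + (t - 4)^2 * x^2
                 = (t + 2) * (y + (t - 3) * x)^2 + (t - 2) * (- t^2 + 3 * t + 1) * x^2)
      by ring.
    rewrite E'. assert (0 <= (t - 2) * (- t^2 + 3 * t + 1)) by (apply Rmult_le_pos; nra).
    apply Rplus_le_le_0_compat; apply Rmult_le_pos; try apply pow2_ge_0; lra.
Qed.

Lemma hB_nonneg (t w x y : R) : 2 <= t -> 0 <= w -> 0 <= qB t w ->
  0 <= x -> 0 <= y -> 0 <= hB t w x y.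
Proof.
  intros Ht Hw HQ Hx Hy.
  (* for small [x], a sum of squares plus a multiple of [qB]; for large [x], convex in [w]
     and nonnegative at both ends of [0 <= w <= (t - 2) / 2] *)
  assert (HW : 2 * w <= t - 2) by (apply w_bound_of_qB_nonneg; lra).
  destruct (Rle_lt_dec ((2 * t + 4) * x) ((5 * t + 1) * y)) as [Hc | Hc].
  - assert (E : hB t w x y
                = (y - x)^2 * (t^2 * (t + 2) * y + 2 * t^2 * ((t + 2) * (t - 2 - 2 * w)) * x)
                  + qB t w * (((5 * t + 1) * y - (2 * t + 4) * x) * x^2))
      by (unfold hB, qB; ring).
    rewrite E. apply Rplus_le_le_0_compat.
    + apply Rmult_le_pos; [apply pow2_ge_0 |].
      apply Rplus_le_le_0_compat; repeat apply Rmult_le_pos; nra.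
    + apply Rmult_le_pos; [exact HQ |]. apply Rmult_le_pos; [lra | apply pow2_ge_0].
  - set (B := - 2 * t^2 * y * x * (2 * t * y + 4 * y + (t - 7) * x)).
    assert (E : hB t w x y
                = ((2 * t + 4) * x - (5 * t + 1) * y) * x^2 * w^2 + (hB t 0 x y + B * w))
      by (unfold hB, B; ring).
    assert (EW : hB t 0 x y + B * ((t - 2) / 2) = t^2 * y * (t + 2) * (y - x)^2)
      by (unfold hB, B; field).
    rewrite E. apply Rplus_le_le_0_compat.
    + repeat apply Rmult_le_pos; try apply pow2_ge_0; lra.
    + apply affine_nonneg_between with ((t - 2) / 2); [lra | apply hB_0_nonneg; auto |].
      rewrite EW. apply Rmult_le_pos; [| apply pow2_ge_0].
      repeat apply Rmult_le_pos; nra.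
Qed.

Definition eBw (t w : R) : fun3 := basis_comb 1 (pB1 t w) (pB2 t w) (pB3 t w) (pB4 t w).

Lemma eB_eBw (t u a b c : R) : eB t u a b c = eBw t (omega u) a b c.
Proof. unfold eB, eBw, basis_comb. ring. Qed.

Lemma eBw_xxy (t w x y : R) : 0 < t ->
  eBw t w x x y = (y - t * x)^2 * hB t w x y / (t^2 * (t + 2)).
Proof.
  intros Ht. unfold eBw, basis_comb, s0, s1, s2, s3, s4, Sn, T, U, S, pB1, pB2, pB3, pB4, hB.
  field. lra.
Qed.

Lemma eBw_xy0 (t w x y : R) :
  eBw t w x y 0 = (x + y) * (x^2 - (w + 2) * x * y + y^2)^2.
Proof. unfold eBw, basis_comb, s0, s1, s2, s3, s4, Sn, T, U, S, pB1, pB2. ring. Qed.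

Lemma eBw_nonneg (t w : R) : 2 <= t -> 0 <= w -> 0 <= qB t w ->
  forall a b c, 0 <= a -> 0 <= b -> 0 <= c -> 0 <= eBw t w a b c.
Proof.
  intros Ht Hw HQ. apply basis_comb_nonneg; intros X Y HX HY; fold (eBw t w).
  - rewrite eBw_xxy by lra.
    apply Rmult_le_pos.
    + apply Rmult_le_pos; [apply pow2_ge_0 | apply hB_nonneg; auto].
    + apply Rlt_le, Rinv_0_lt_compat. nra.
  - rewrite eBw_xy0. apply Rmult_le_pos; [lra | apply pow2_ge_0].
Qed.

Lemma mu_R_root (t : R) : 2 <= t -> 2 <= mu_R t /\ qB t (mu_R t - 2) = 0.
Proof.
  intros Ht. unfold mu_R, qB.
  assert (Hp : 0 <= (t - 1) * (t + 2)) by nra.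
  assert (Hs2 := sqrt_sqrt _ Hp). assert (Hs0 := sqrt_pos ((t - 1) * (t + 2))).
  set (s := sqrt ((t - 1) * (t + 2))) in *.
  assert (t <= s) by nra.
  split; nra.
Qed.

Lemma omega_bounds (m u : R) : 2 <= m -> (m - sqrt (m^2 - 4)) / 2 <= u <= 1 ->
  0 < u /\ 0 <= omega u <= m - 2.
Proof.
  intros Hm [Hu1 Hu2].
  assert (Hp : 0 <= m^2 - 4) by nra.
  assert (Hd2 := sqrt_sqrt _ Hp). assert (Hd0 := sqrt_pos (m^2 - 4)).
  set (d := sqrt (m^2 - 4)) in *.
  assert (Hdm : d < m) by nra.
  assert (Hu : 0 < u) by lra.
  assert (Hinv : u * (1 / u) = 1) by (field; lra).
  assert (Hinv0 : 0 < 1 / u) by (apply Rdiv_lt_0_compat; lra).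
  unfold omega. split; [exact Hu | split].
  - nra.
  - assert (1 / u <= (m + d) / 2) by nra. nra.
Qed.

(* [mu_B t] is the smaller root of [v + 1/v = mu_R t], so [mu_B t <= u <= 1] places
   [omega u] below [mu_R t - 2], the positive root of the decreasing function [qB t]. *)
Lemma eB_params (t u : R) : 2 <= t -> mu_B t <= u <= 1 ->
  0 < u /\ 0 <= omega u /\ 0 <= qB t (omega u).
Proof.
  intros Ht Hu.
  destruct (mu_R_root t Ht) as [Hm HQ].
  destruct (omega_bounds (mu_R t) u Hm Hu) as (Hu0 & Hw0 & Hw).
  repeat split; auto.
  rewrite <- HQ. unfold qB. nra.
Qed.

Lemma eB_in_P (t u : R) : 2 <= t -> mu_B t <= u <= 1 -> in_P (eB t u).
Proof.
  intros Ht Hu. destruct (eB_params t u Ht Hu) as (_ & Hw & HQ). split.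
  - exists 1, (pB1 t (omega u)), (pB2 t (omega u)), (pB3 t (omega u)), (pB4 t (omega u)).
    apply eB_eBw.
  - intros a b c Ha Hb Hc. rewrite eB_eBw. apply eBw_nonneg; auto.
Qed.

Lemma basis_comb_y11_split (t w x0 x3 x4 y : R) : 0 < t ->
  basis_comb x0 (x0 * pB1 t w) (x0 * pB2 t w) x3 x4 y 1 1
  = x0 * ((y - t)^2 * hB t w 1 y / (t^2 * (t + 2)))
    + (x3 - x0 * pB3 t w) * (y * (y - 1)^2) + (x4 - x0 * pB4 t w) * (y * (2 * y + 1)).
Proof.
  intros Ht. assert (E := eBw_xxy t w 1 y Ht). rewrite Rmult_1_r in E. rewrite <- E.
  unfold eBw, basis_comb, s0, s1, s2, s3, s4, Sn, T, U, S. ring.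
Qed.

Lemma coeffs34_of_zero_at_t11 (t w x0 x3 x4 : R) : 2 <= t ->
  (forall y, 0 <= y -> 0 <= basis_comb x0 (x0 * pB1 t w) (x0 * pB2 t w) x3 x4 y 1 1) ->
  basis_comb x0 (x0 * pB1 t w) (x0 * pB2 t w) x3 x4 t 1 1 = 0 ->
  x3 = x0 * pB3 t w /\ x4 = x0 * pB4 t w.
Proof.
  intros Ht Hpos Hzero.
  set (phi := fun y => basis_comb x0 (x0 * pB1 t w) (x0 * pB2 t w) x3 x4 y 1 1).
  set (y3 := x3 - x0 * pB3 t w). set (y4 := x4 - x0 * pB4 t w).
  assert (Hval : y3 * (t - 1)^2 + y4 * (2 * t + 1) = 0).
  { rewrite basis_comb_y11_split in Hzero by lra. fold y3 y4 in Hzero.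
    replace (t - t) with 0 in Hzero by ring.
    assert (H : t * (y3 * (t - 1)^2 + y4 * (2 * t + 1)) = 0)
      by (rewrite <- Hzero; field; lra).
    apply Rmult_integral in H as [H | H]; lra. }
  assert (Hder : is_derive phi t (y3 * ((t - 1)^2 + 2 * t * (t - 1)) + y4 * (4 * t + 1))).
  { apply is_derive_ext with
      (fun y => x0 * ((y - t)^2 * hB t w 1 y / (t^2 * (t + 2)))
                + y3 * (y * (y - 1)^2) + y4 * (y * (2 * y + 1))).
    - intros y. unfold phi. rewrite basis_comb_y11_split by lra. reflexivity.
    - unfold hB. auto_derive; [exact I | field; lra]. }
  assert (Hcrit : y3 * ((t - 1)^2 + 2 * t * (t - 1)) + y4 * (4 * t + 1) = 0).
  { rewrite <- (is_derive_unique _ _ _ Hder).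
    apply Derive_local_min with t; [eexists; exact Hder | lra |].
    intros x Hx. unfold phi. rewrite Hzero. apply Hpos. lra. }
  assert (Hy3 : y3 * (2 * t * (t - 1) * (t + 2)) = 0) by nra.
  assert (y3 = 0).
  { apply Rmult_integral in Hy3 as [H | H]; [exact H |].
    assert (0 < 2 * t * (t - 1) * (t + 2)) by (repeat apply Rmult_lt_0_compat; lra). lra. }
  assert (y4 = 0) by nra.
  unfold y3, y4 in *. split; lra.
Qed.

Lemma eq_eBw_of_coeffs12 (t w : R) (f : fun3) (x0 x1 x2 x3 x4 : R) : 2 <= t ->
  (forall a b c, f a b c = basis_comb x0 x1 x2 x3 x4 a b c) ->
  (forall a b c, 0 <= a -> 0 <= b -> 0 <= c -> 0 <= f a b c) ->
  f t 1 1 = 0 -> x1 = x0 * pB1 t w -> x2 = x0 * pB2 t w ->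
  exists l, 0 <= l /\ forall a b c, f a b c = l * eBw t w a b c.
Proof.
  intros Ht Hf Hpos Hzero -> ->.
  destruct (coeffs34_of_zero_at_t11 t w x0 x3 x4 Ht) as [-> ->].
  - intros y Hy. rewrite <- Hf. apply Hpos; lra.
  - rewrite <- Hf. exact Hzero.
  - exists x0. split.
    + replace x0 with (f 0 0 1) by (rewrite Hf, basis_comb_0b1; ring).
      apply Hpos; lra.
    + intros a b c. rewrite Hf. unfold eBw, basis_comb. ring.
Qed.

Lemma omega_1 : omega 1 = 0.
Proof. unfold omega. field. Qed.

Lemma coeffs12_of_double_root (t u x0 x1 x2 : R) : 0 < u < 1 ->
  x0 * (u^5 + 1) + x1 * (u^4 + u) + x2 * (u^3 + u^2) = 0 ->
  5 * x0 * u^4 + x1 * (4 * u^3 + 1) + x2 * (3 * u^2 + 2 * u) = 0 ->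
  x1 = x0 * pB1 t (omega u) /\ x2 = x0 * pB2 t (omega u).
Proof.
  intros Hu E1 E2.
  set (y1 := x1 - x0 * pB1 t (omega u)). set (y2 := x2 - x0 * pB2 t (omega u)).
  assert (F1 : y1 * (u^4 + u) + y2 * (u^3 + u^2) = 0).
  { unfold y1, y2, pB1, pB2, omega. rewrite <- E1. field. lra. }
  assert (F2 : y1 * (4 * u^3 + 1) + y2 * (3 * u^2 + 2 * u) = 0).
  { unfold y1, y2, pB1, pB2, omega. rewrite <- E2. field. lra. }
  assert (Hdet : 0 < u^2 * (1 - u) * (u + 1)^3)
    by (repeat apply Rmult_lt_0_compat; try apply pow_lt; lra).
  assert (G1 : y1 * (u^2 * (1 - u) * (u + 1)^3) = 0).
  { transitivity ((3 * u^2 + 2 * u) * (y1 * (u^4 + u) + y2 * (u^3 + u^2))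
                  - (u^3 + u^2) * (y1 * (4 * u^3 + 1) + y2 * (3 * u^2 + 2 * u))).
    - ring.
    - rewrite F1, F2. ring. }
  assert (G2 : y2 * (u^2 * (1 - u) * (u + 1)^3) = 0).
  { transitivity ((u^4 + u) * (y1 * (4 * u^3 + 1) + y2 * (3 * u^2 + 2 * u))
                  - (4 * u^3 + 1) * (y1 * (u^4 + u) + y2 * (u^3 + u^2))).
    - ring.
    - rewrite F1, F2. ring. }
  apply Rmult_integral in G1 as [G1 | G1]; [| lra].
  apply Rmult_integral in G2 as [G2 | G2]; [| lra].
  unfold y1, y2 in *. split; lra.
Qed.

Lemma coeffs12_of_triple_root_at_1 (t x0 x1 x2 : R) :
  x0 + x1 + x2 = 0 -> 20 * x0 + 12 * x1 + 8 * x2 = 0 ->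
  x1 = x0 * pB1 t (omega 1) /\ x2 = x0 * pB2 t (omega 1).
Proof. intros E1 E2. rewrite omega_1. unfold pB1, pB2. split; lra. Qed.

Lemma f_b_basis_comb (f : fun3) (x0 x1 x2 x3 x4 b : R) :
  (forall a b c, f a b c = basis_comb x0 x1 x2 x3 x4 a b c) ->
  f_b f 0 b 1 = 5 * x0 * b^4 + x1 * (4 * b^3 + 1) + x2 * (3 * b^2 + 2 * b).
Proof.
  intros Hf. unfold f_b.
  rewrite (Derive_ext _ (fun y => x0 * (y^5 + 1) + x1 * (y^4 + y) + x2 * (y^3 + y^2)))
    by (intros y; rewrite Hf; apply basis_comb_0b1).
  apply is_derive_unique. auto_derive; [exact I | ring].
Qed.

Lemma f_bb_basis_comb (f : fun3) (x0 x1 x2 x3 x4 b : R) :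
  (forall a b c, f a b c = basis_comb x0 x1 x2 x3 x4 a b c) ->
  f_bb f 0 b 1 = 20 * x0 * b^3 + 12 * x1 * b^2 + x2 * (6 * b + 2).
Proof.
  intros Hf. unfold f_bb.
  rewrite (Derive_n_ext _ (fun y => x0 * (y^5 + 1) + x1 * (y^4 + y) + x2 * (y^3 + y^2)))
    by (intros y; rewrite Hf; apply basis_comb_0b1).
  simpl.
  rewrite (Derive_ext _ (fun y => 5 * x0 * y^4 + x1 * (4 * y^3 + 1) + x2 * (3 * y^2 + 2 * y)))
    by (intros y; apply is_derive_unique; auto_derive; [exact I | ring]).
  apply is_derive_unique. auto_derive; [exact I | ring].
Qed.

Lemma eB_unique_lt1 (t u : R) (f : fun3) : 2 <= t -> 0 < u < 1 -> in_P f ->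
  f t 1 1 = 0 -> f 0 u 1 = 0 -> f_b f 0 u 1 = 0 ->
  exists l, 0 <= l /\ forall a b c, f a b c = l * eB t u a b c.
Proof.
  intros Ht Hu [(x0 & x1 & x2 & x3 & x4 & Hf) Hpos] Hzt Hzu Hd.
  change (forall a b c, f a b c = basis_comb x0 x1 x2 x3 x4 a b c) in Hf.
  rewrite (f_b_basis_comb f x0 x1 x2 x3 x4 u Hf) in Hd.
  rewrite Hf, basis_comb_0b1 in Hzu.
  destruct (coeffs12_of_double_root t u x0 x1 x2 Hu Hzu Hd) as [H1 H2].
  destruct (eq_eBw_of_coeffs12 t (omega u) f x0 x1 x2 x3 x4 Ht Hf Hpos Hzt H1 H2)
    as (l & Hl & Hfl).
  exists l. split; [exact Hl |]. intros a b c. rewrite Hfl, eB_eBw. reflexivity.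
Qed.

Lemma eB_unique_1 (t : R) (f : fun3) : 2 <= t -> in_P f ->
  f t 1 1 = 0 -> f 0 1 1 = 0 -> f_bb f 0 1 1 = 0 ->
  exists l, 0 <= l /\ forall a b c, f a b c = l * eB t 1 a b c.
Proof.
  intros Ht [(x0 & x1 & x2 & x3 & x4 & Hf) Hpos] Hzt Hz1 Hd.
  change (forall a b c, f a b c = basis_comb x0 x1 x2 x3 x4 a b c) in Hf.
  rewrite (f_bb_basis_comb f x0 x1 x2 x3 x4 1 Hf) in Hd.
  rewrite Hf, basis_comb_0b1 in Hz1.
  destruct (coeffs12_of_triple_root_at_1 t x0 x1 x2) as [H1 H2]; [lra | lra |].
  destruct (eq_eBw_of_coeffs12 t (omega 1) f x0 x1 x2 x3 x4 Ht Hf Hpos Hzt H1 H2)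
    as (l & Hl & Hfl).
  exists l. split; [exact Hl |]. intros a b c. rewrite Hfl, eB_eBw. reflexivity.
Qed.

Lemma eB_0b1 (t u b : R) : eB t u 0 b 1 = (1 + b) * (b^2 - (omega u + 2) * b + 1)^2.
Proof. unfold eB, s0, s1, s2, s3, s4, Sn, T, U, S, pB1, pB2. ring. Qed.

Lemma eB_t11 (t u : R) : 0 < t -> eB t u t 1 1 = 0.
Proof.
  intros Ht. rewrite eB_eBw.
  transitivity (eBw t (omega u) 1 1 t);
    [unfold eBw, basis_comb, s0, s1, s2, s3, s4, Sn, T, U, S; ring |].
  rewrite eBw_xxy by exact Ht. replace (t - t * 1) with 0 by ring. unfold Rdiv. ring.
Qed.

Lemma eB_0u1 (t u : R) : 0 < u -> eB t u 0 u 1 = 0.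
Proof. intros Hu. rewrite eB_0b1. unfold omega. field_simplify; [ring | lra]. Qed.

Lemma f_b_zero_at_min (f : fun3) (u : R) : in_P f -> 0 < u -> f 0 u 1 = 0 ->
  f_b f 0 u 1 = 0.
Proof.
  intros [(x0 & x1 & x2 & x3 & x4 & Hf) Hpos] Hu Hzero.
  change (forall a b c, f a b c = basis_comb x0 x1 x2 x3 x4 a b c) in Hf.
  apply Derive_local_min with u; [| exact Hu |].
  - apply ex_derive_ext with (fun y => x0 * (y^5 + 1) + x1 * (y^4 + y) + x2 * (y^3 + y^2)).
    + intros y. rewrite Hf, basis_comb_0b1. reflexivity.
    + auto_derive. exact I.
  - intros y Hy. rewrite Hzero. apply Hpos; lra.
Qed.

(* When [f 0 1 1 = 0], palindromy gives [f 0 b 1 = (b + 1) (b - 1)^2 M b] with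
   [M b = x0 (b - 1)^2 + (x1 + 3 x0) b], and [f_bb f 0 1 1 = 4 M 1]. *)
Lemma f_bb_nonneg_at_011 (f : fun3) : in_P f -> f 0 1 1 = 0 -> 0 <= f_bb f 0 1 1.
Proof.
  intros [(x0 & x1 & x2 & x3 & x4 & Hf) Hpos] Hzero.
  change (forall a b c, f a b c = basis_comb x0 x1 x2 x3 x4 a b c) in Hf.
  rewrite (f_bb_basis_comb f x0 x1 x2 x3 x4 1 Hf).
  rewrite Hf, basis_comb_0b1 in Hzero.
  replace x2 with (- x0 - x1) in * by lra.
  set (M := fun b => x0 * (b - 1)^2 + (x1 + 3 * x0) * b).
  assert (HM : 0 <= M 1).
  { apply continuous_nonneg_at_right.
    - apply (ex_derive_continuous (K := R_AbsRing) (V := R_NormedModule)).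
      unfold M. auto_derive. exact I.
    - unfold at_right, within. apply filter_forall. intros b Hb.
      assert (Hfac : 0 < (b + 1) * (b - 1)^2)
        by (apply Rmult_lt_0_compat; [lra | apply pow_lt; lra]).
      assert (H := Hpos 0 b 1 ltac:(lra) ltac:(lra) ltac:(lra)).
      rewrite Hf, basis_comb_0b1 in H.
      replace (x0 * (b^5 + 1) + x1 * (b^4 + b) + (- x0 - x1) * (b^3 + b^2))
        with ((b + 1) * (b - 1)^2 * M b) in H by (unfold M; ring).
      nra. }
  unfold M in HM. lra.
Qed.

Lemma f_bb_at_011 (f : fun3) : in_P f -> f 0 1 1 = 0 ->
  f_bb f 0 1 1 = 2 * (f 0 2 1 / 3 - f 0 0 1).
Proof.
  intros [(x0 & x1 & x2 & x3 & x4 & Hf) _] Hzero.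
  change (forall a b c, f a b c = basis_comb x0 x1 x2 x3 x4 a b c) in Hf.
  rewrite (f_bb_basis_comb f x0 x1 x2 x3 x4 1 Hf), !Hf, !basis_comb_0b1.
  rewrite Hf, basis_comb_0b1 in Hzero.
  lra.
Qed.

Lemma summand_vanishes (F g h : fun3) (a b c : R) : in_P g -> in_P h ->
  (forall a b c, F a b c = g a b c + h a b c) ->
  0 <= a -> 0 <= b -> 0 <= c -> F a b c = 0 -> g a b c = 0.
Proof.
  intros [_ Hg] [_ Hh] Hsum Ha Hb Hc Hzero.
  rewrite Hsum in Hzero. assert (Hg' := Hg a b c Ha Hb Hc). assert (Hh' := Hh a b c Ha Hb Hc).
  lra.
Qed.

Lemma eB_summand_proportional (t u : R) (g h : fun3) : 2 <= t -> mu_B t <= u <= 1 ->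
  in_P g -> in_P h -> (forall a b c, eB t u a b c = g a b c + h a b c) ->
  exists l, 0 <= l /\ forall a b c, g a b c = l * eB t u a b c.
Proof.
  intros Ht Hu Pg Ph Hsum.
  destruct (eB_params t u Ht Hu) as [Hu0 _].
  assert (Hsum' : forall a b c, eB t u a b c = h a b c + g a b c)
    by (intros a b c; rewrite Hsum; ring).
  assert (Gt : g t 1 1 = 0)
    by (apply (summand_vanishes (eB t u) g h); auto; try lra; apply eB_t11; lra).
  assert (Gu : g 0 u 1 = 0)
    by (apply (summand_vanishes (eB t u) g h); auto; try lra; apply eB_0u1; lra).
  destruct (Rlt_le_dec u 1) as [Hu1 | Hu1].
  - apply eB_unique_lt1; auto. apply f_b_zero_at_min; auto.
  - replace u with 1 in * by lra.
    assert (Hh1 : h 0 1 1 = 0)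
      by (apply (summand_vanishes (eB t 1) h g); auto; try lra; apply eB_0u1; lra).
    apply eB_unique_1; auto.
    (* both second derivatives are nonnegative and, being determined by values of the
       function, add up to that of [eB t 1], which is 0 *)
    assert (Hg2 := f_bb_nonneg_at_011 g Pg Gu). assert (Hh2 := f_bb_nonneg_at_011 h Ph Hh1).
    rewrite (f_bb_at_011 g Pg Gu) in *. rewrite (f_bb_at_011 h Ph Hh1) in Hh2.
    assert (E2 := Hsum 0 2 1). assert (E0 := Hsum 0 0 1).
    rewrite eB_0b1, omega_1 in E2, E0.
    lra.
Qed.

Lemma eB_extremal (t u : R) : 2 <= t -> mu_B t <= u <= 1 -> extremal in_P (eB t u).
Proof.
  intros Ht Hu. split; [| split].
  - apply eB_in_P; auto.
  - exists 0, 0, 1. rewrite eB_0b1. lra.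
  - intros g h Pg Ph Hsum. split.
    + apply (eB_summand_proportional t u g h); auto.
    + apply (eB_summand_proportional t u h g); auto.
      intros a b c. rewrite Hsum. ring.
Qed.

Lemma eB_2_1 (a b c : R) : eB 2 1 a b c = eC 2 a b c.
Proof. rewrite eB_eBw, omega_1. unfold eBw, basis_comb, eC, pB1, pB2, pB3, pB4. field. Qed.

Theorem theorem4p10 :
  (forall t u : R, 2 <= t -> mu_B t <= u <= 1 -> extremal in_P (eB t u)) /\
  (forall (t u : R) (f : fun3), 2 <= t -> mu_B t <= u < 1 -> in_P f ->
     f t 1 1 = 0 -> f 0 u 1 = 0 -> f_b f 0 u 1 = 0 ->
     exists l, 0 <= l /\ forall a b c, f a b c = l * eB t u a b c) /\
  (forall (t : R) (f : fun3), 2 <= t -> in_P f ->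
     f t 1 1 = 0 -> f 0 1 1 = 0 -> f_bb f 0 1 1 = 0 ->
     exists l, 0 <= l /\ forall a b c, f a b c = l * eB t 1 a b c) /\
  (forall a b c : R, eB 2 1 a b c = eC 2 a b c).
Proof.
  split; [exact eB_extremal |].
  split; [| split; [exact eB_unique_1 | exact eB_2_1]].
  intros t u f Ht [Hu1 Hu2]. apply eB_unique_lt1; [exact Ht |].
  destruct (eB_params t u Ht (conj Hu1 (Rlt_le _ _ Hu2))) as [Hu0 _]. lra.
Qed.
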